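(* Let $b_1<b_2$, $T\ge b_1+b_2$ be positive integers, $k=T-b_1$, and let $P'_0,\dots,P'_{T-b_1}\in\mathbb F^{k\times b_2}$, with $P'_\ell=0$ for $\ell>T-b_1$. Let $\mathbf P_{\mathrm{RD}}=(P'_{b_2+j-i})_{i\in[b_2],\,j\in[T-b_1]}$, a square $(T-b_1)b_2\times(T-b_1)b_2$ matrix. If $\mathbf P_{\mathrm{RD}}$ is invertible (equivalently, in the RD code $P[t]=\sum_i R[t-i]P'_i$ of a rate-optimal TBSC, the $b_2$ message packets erased in a burst are uniquely recovered from the next $T-b_1$ parity packets), then $P'_{T-b_1}$ has full column rank $b_2$.
   Context: The rate-optimal RD link is modeled as a systematic convolutional code with message packets $R[t]\in\mathbb F^{k}$, $k=T-b_1$, parity packets $P[t]=\sum_{i=0}^{T-b_1}R[t-i]P'_i\in\mathbb F^{b_2}$; for a burst erasing $R[t],\dots,R[t+b_2-1]$, the modified parities $(\bar P[t+b_2],\dots,\bar P[t+b_2+T-b_1-1])=(R[t],\dots,R[t+b_2-1])\,\mathbf P_{\mathrm{RD}}$. *)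

From HB Require Import structures.
From mathcomp Require Import all_boot all_order all_algebra.
Set Implicit Arguments. Unset Strict Implicit. Unset Printing Implicit Defensive.
Import GRing.Theory.
Local Open Scope ring_scope.

(* The block matrix P_RD = (P'_{b2+j-i})_{i in [b2], j in [k]}, with k x b2
   blocks (0-based indices i < b2, j < k; b2 + j - i >= 1 so no truncation). *)
Definition PRD (F : fieldType) (k b2 : nat) (P' : nat -> 'M[F]_(k, b2)) :
  'M[F]_(\sum_(i < b2) k, \sum_(j < k) b2) :=
  \mxblock_(i < b2, j < k) P' (b2 + j - i)%N.

From HB Require Import structures.
From mathcomp Require Import all_boot all_order all_algebra.
From mathcomp Require Import zify.
Set Implicit Arguments. Unset Strict Implicit. Unset Printing Implicit Defensive.
Import GRing.Theory.
Local Open Scope ring_scope.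

(* In the last block column of P_RD every block except the bottom one,
   P'_{T-b1}, has index beyond T - b1 and hence vanishes.  Since P_RD is
   invertible, each of its block columns has full column rank b2, so
   rank P'_{T-b1} = b2. *)

Section BlockSelectors.
Variable R : pzSemiRingType.

Definition mxcol_delta n q (j0 : 'I_n) : 'M[R]_(\sum_(j < n) q, q) :=
  \mxcol_j (if j == j0 then 1%:M else 0 : 'M_q).

Definition mxrow_delta n q (j0 : 'I_n) : 'M[R]_(q, \sum_(j < n) q) :=
  \mxrow_j (if j == j0 then 1%:M else 0 : 'M_q).

Lemma mul_mxrow_mxcol_delta n q (j0 : 'I_n) :
  mxrow_delta q j0 *m mxcol_delta q j0 = 1%:M.
Proof.
rewrite mul_mxrow_mxcol (bigD1 j0) //= eqxx mulmx1 big1 ?addr0 //.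
by move=> j /negbTE ->; rewrite mul0mx.
Qed.

Lemma mul_mxblock_mxcol_delta m n (p_ : 'I_m -> nat) q
    (B_ : forall i (j : 'I_n), 'M[R]_(p_ i, q)) (j0 : 'I_n) :
  \mxblock_(i, j) B_ i j *m mxcol_delta q j0 = \mxcol_i B_ i j0.
Proof.
rewrite mul_mxblock_mxrow; apply: eq_mxcol => i.
rewrite (bigD1 j0) //= eqxx mulmx1 big1 ?addr0 //.
by move=> j /negbTE ->; rewrite mulmx0.
Qed.

Lemma mxcol_delta_mul m n q (i0 : 'I_m) (A : 'M[R]_(q, n)) :
  \mxcol_i (if i == i0 then A else 0 : 'M_(q, n)) = mxcol_delta q i0 *m A.
Proof.
by rewrite mxcol_mul; apply: eq_mxcol => i; case: eqP; rewrite ?mul1mx ?mul0mx.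
Qed.

End BlockSelectors.

Section LeftInverseRank.
Variable F : fieldType.

Lemma mxrank_mul_leftinv m n p (Q : 'M[F]_(n, m)) (M : 'M_(m, n)) (A : 'M_(n, p)) :
  Q *m M = 1%:M -> \rank (M *m A) = \rank A.
Proof.
move=> QM; apply/eqP; rewrite eqn_leq mxrankM_maxr /=.
by rewrite -{1}(mul1mx A) -QM -mulmxA mxrankM_maxr.
Qed.

Lemma mxrank_leftinv m n (Q : 'M[F]_(n, m)) (M : 'M_(m, n)) :
  Q *m M = 1%:M -> \rank M = n.
Proof. by move=> QM; rewrite -(mulmx1 M) (mxrank_mul_leftinv _ QM) mxrank1. Qed.

Lemma mxrank_mxcol_delta n q (j0 : 'I_n) : \rank (mxcol_delta F q j0) = q.
Proof. exact: mxrank_leftinv (mul_mxrow_mxcol_delta F q j0). Qed.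

Lemma mxrank_mxcol_single m n q (i0 : 'I_m) (A : 'M[F]_(q, n)) :
  \rank (\mxcol_i (if i == i0 then A else 0 : 'M_(q, n))) = \rank A.
Proof.
by rewrite mxcol_delta_mul (mxrank_mul_leftinv _ (mul_mxrow_mxcol_delta F q i0)).
Qed.

Lemma mxrank_mxblock_col_leftinv m n (p_ : 'I_m -> nat) q
    (B_ : forall i (j : 'I_n), 'M[F]_(p_ i, q)) Q (j0 : 'I_n) :
  Q *m \mxblock_(i, j) B_ i j = 1%:M -> \rank (\mxcol_i B_ i j0) = q.
Proof.
move=> QB; rewrite -mul_mxblock_mxcol_delta (mxrank_mul_leftinv _ QB).
exact: mxrank_mxcol_delta.
Qed.

End LeftInverseRank.

Lemma PRD_last_block_col (F : fieldType) k b2 (P' : nat -> 'M[F]_(k, b2))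
    (jk : 'I_k) (ib : 'I_b2) :
  jk = k.-1 :> nat -> ib = b2.-1 :> nat ->
  (forall l, (k < l)%N -> P' l = 0) ->
  \mxcol_(i < b2) P' (b2 + jk - i)%N =
    \mxcol_i (if i == ib then P' k else 0 : 'M_(k, b2)).
Proof.
move=> jkE ibE Pz; apply: eq_mxcol => i.
have [-> | ne] := eqVneq i ib.
  by congr (P' _); have := ltn_ord jk; have := ltn_ord ib; lia.
apply: Pz; have := ltn_ord i; have := ltn_ord jk.
by move: ne; rewrite -(inj_eq val_inj) /=; lia.
Qed.

Theorem mainTheorem11 (F : fieldType) (b1 b2 T : nat)
  (P' : nat -> 'M[F]_(T - b1, b2)) :
  (0 < b1)%N -> (b1 < b2)%N -> (b1 + b2 <= T)%N ->
  (forall l, (T - b1 < l)%N -> P' l = 0) ->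
  (exists Q : 'M[F]_(\sum_(j < T - b1) b2, \sum_(i < b2) (T - b1)),
      PRD P' *m Q = 1%:M /\ Q *m PRD P' = 1%:M) ->
  \rank (P' (T - b1)%N) = b2.
Proof.
move=> b1_gt0 b12 b12T Pz [Q [_ QP]]; rewrite /PRD in QP.
have k_last : ((T - b1).-1 < T - b1)%N by lia.
have b2_last : (b2.-1 < b2)%N by lia.
rewrite -(mxrank_mxcol_single (Ordinal b2_last)).
rewrite -(PRD_last_block_col (jk := Ordinal k_last)) //.
exact: (mxrank_mxblock_col_leftinv (Ordinal k_last) QP).
Qed.
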